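(* Let $k\ge1$ and let $\pi_0,\dots,\pi_{k-1}$ be (possibly random) policies. Then for every $s\in\mathcal S$, $$\sum_{t=0}^{k-1}\mathbb E_{\{\pi_t\}}\big[V^{\pi_t}(s)-V^{\pi^*}(s)\big]\;\le\;(1-\gamma)^{-1}\max_{s'\in\mathcal S}\mathbb E_{\{\pi_t\}}\big[g^{\pi_{[k]}}(s')\big],$$ where the aggregated advantage gap function is $g^{\pi_{[k]}}(s):=\max_{p\in\Delta_{|\mathcal A|}}\big\{-\sum_{t=0}^{k-1}\psi^{\pi_t}(s,p)\big\}$.
   Context: An infinite-horizon discounted MDP is given by a finite state space $\mathcal S$, a finite action space $\mathcal A$, transition probabilities $\mathcal P(s'\mid s,a)$, a cost $c:\mathcal S\times\mathcal A\to\mathbb R$ and a discount factor $\gamma\in[0,1)$. $\Delta_{|\mathcal A|}$ is the probability simplex over $\mathcal A$. A policy $\pi$ assigns $\pi(\cdot\mid s)\in\Delta_{|\mathcal A|}$ to each state. For each $s$, $p\mapsto h^{p}(s)$ is a closed convex function on $\Delta_{|\mathcal A|}$ (regularizer). $V^\pi(s)=\mathbb E\big[\sum_{t\ge0}\gamma^t(c(s_t,a_t)+h^{\pi(\cdot\mid s_t)}(s_t))\mid s_0=s,\ a_t\sim\pi(\cdot\mid s_t),\ s_{t+1}\sim\mathcal P(\cdot\mid s_t,a_t)\big]$, and $Q^\pi(s,a)$ is the same with $a_0=a$. $\pi^*$ is an optimal policy: $V^{\pi^*}(s)\le V^\pi(s)$ for all $\pi$, $s$. The advantage function is $\psi^\pi(s,p):=\langle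 Q^\pi(s,\cdot),p\rangle-V^\pi(s)+h^{p}(s)-h^{\pi(\cdot\mid s)}(s)$ for $p\in\Delta_{|\mathcal A|}$. $\mathbb E_{\{\pi_t\}}$ denotes expectation over the randomness of the policies. *)

From HB Require Import structures.
From mathcomp Require Import all_boot all_order all_algebra.
From mathcomp Require Import all_classical all_reals all_analysis.
Set Implicit Arguments. Unset Strict Implicit. Unset Printing Implicit Defensive.
Import Order.TTheory GRing.Theory Num.Theory.
Import numFieldNormedType.Exports.
Local Open Scope classical_set_scope.
Local Open Scope ring_scope.

Section MDP.
Variables (R : realType) (S A : finType).

Definition in_simplex (X : finType) (p : X -> R) : Prop :=
  (forall x, 0 <= p x) /\ \sum_(x : X) p x = 1.

Definition is_policy (pi : S -> A -> R) : Prop := forall s, in_simplex (pi s).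

(* transition kernel: P s a s' = P(s' | s, a) *)
Definition is_transition (P : S -> A -> S -> R) : Prop :=
  forall s a, in_simplex (P s a).

(* closed (lower semicontinuous relative to the simplex) convex real function
   on the simplex *)
Definition closed_convex_on_simplex (f : (A -> R) -> R) : Prop :=
  (forall p q (l : R), in_simplex p -> in_simplex q -> 0 <= l <= 1 ->
     f (fun a => l * p a + (1 - l) * q a) <= l * f p + (1 - l) * f q) /\
  (forall p, in_simplex p -> forall e : R, 0 < e -> exists2 del : R, 0 < del &
     forall q, in_simplex q -> (forall a, `|q a - p a| < del) -> f p - e < f q).

Variables (P : S -> A -> S -> R) (c : S -> A -> R) (h : S -> (A -> R) -> R)
  (gamma : R).

Definition stage_cost (pi : S -> A -> R) (s : S) : R :=
  \sum_(a : A) pi s a * c s a + h s (pi s).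

Fixpoint state_dist (pi : S -> A -> R) (mu : S -> R) (t : nat) : S -> R :=
  match t with
  | 0%N => mu
  | t'.+1 => fun s'' => \sum_(s' : S) state_dist pi mu t' s' *
                          \sum_(a : A) pi s' a * P s' a s''
  end.

Definition disc_value (pi : S -> A -> R) (mu : S -> R) : R :=
  limn (series (fun t : nat =>
    gamma ^+ t * \sum_(s' : S) state_dist pi mu t s' * stage_cost pi s')).

Definition Vf (pi : S -> A -> R) (s : S) : R :=
  disc_value pi (fun s' => if s' == s then 1 else 0).

(* Q^pi(s,a): same with a_0 = a (conditioning on the first transition) *)
Definition Qf (pi : S -> A -> R) (s : S) (a : A) : R :=
  c s a + h s (pi s) + gamma * disc_value pi (P s a).

Definition psi (pi : S -> A -> R) (s : S) (p : A -> R) : R :=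
  \sum_(a : A) Qf pi s a * p a - Vf pi s + h s p - h s (pi s).

Definition gap (k : nat) (pis : 'I_k -> S -> A -> R) (s : S) : R :=
  sup [set (- \sum_(t < k) psi (pis t) s p) | p in [set p | in_simplex p]].

End MDP.

From HB Require Import structures.
From mathcomp Require Import all_boot all_order all_algebra.
From mathcomp Require Import all_classical all_reals all_analysis.
From mathcomp Require Import ring lra.
Set Implicit Arguments. Unset Strict Implicit. Unset Printing Implicit Defensive.
Import Order.TTheory GRing.Theory Num.Theory.
Local Open Scope ring_scope.

(* Performance difference: for policies pi and pi',
     V^pi(s) - V^pi'(s) = - psi^pi(s, pi'(s)) + gamma E_{s' ~ P^pi'(s)} [V^pi(s') - V^pi'(s')].
   Summing over the pi_t with pi' = pistar and bounding - sum_t psi^{pi_t}(s, pistar(s))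
   by the gap g(s), the cumulative regret u(s) = sum_t (V^{pi_t}(s) - V^pistar(s))
   satisfies u <= g + gamma P^pistar u pointwise, hence also in expectation; at a state
   maximizing E u this gives (1 - gamma) max E u <= max E g.
   Since the gap is a supremum, the bound by g(s) needs the advantages to be bounded on
   the simplex, i.e. the convex regularizer to be bounded below there: it is bounded above
   by its values at the vertices, hence below by reflection through the centroid. *)

Section Simplex.
Variables (R : realType) (X : finType).
Implicit Types (p q : X -> R) (x y : X).

Definition vertex x : X -> R := fun y => if y == x then 1 else 0.

Lemma simplex_le1 p x : in_simplex p -> p x <= 1.
Proof. by move=> [p0 <-]; rewrite (bigD1 x) //= lerDl sumr_ge0. Qed.

Lemma vertex_simplex x : in_simplex (vertex x).
Proof.
split=> [y|]; first by rewrite /vertex; case: ifP.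
by rewrite (bigD1 x) //= /vertex eqxx big1 ?addr0 // => y /negbTE ->.
Qed.

Lemma sum_vertexM x (f : X -> R) : \sum_y vertex x y * f y = f x.
Proof.
rewrite (bigD1 x) //= /vertex eqxx mul1r big1 ?addr0 // => y /negbTE ->.
by rewrite mul0r.
Qed.

Lemma sum_Mvertex x (f : X -> R) : \sum_y f y * vertex y x = f x.
Proof.
rewrite (bigD1 x) //= /vertex eqxx mulr1 big1 ?addr0 // => y.
by rewrite eq_sym => /negbTE ->; rewrite mulr0.
Qed.

Lemma simplex_neq0 p : in_simplex p -> exists x, p x != 0.
Proof.
move=> [_ p1]; apply/existsP; apply: contraT; rewrite negb_exists => /forallP p0.
by move: p1; rewrite big1 => [/eqP|y _]; [rewrite eq_sym oner_eq0 | exact/eqP/negPn].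
Qed.

Lemma norm_simplex_comb_le p (r : X -> R) : in_simplex p ->
  `|\sum_x p x * r x| <= \sum_x `|r x|.
Proof.
move=> hp; apply: (le_trans (ler_norm_sum _ _ _)); apply: ler_sum => x _.
by rewrite normrM ger0_norm ?hp.1 // ler_piMl // simplex_le1.
Qed.

Definition remove_vertex q x : X -> R :=
  fun y => if y == x then 0 else q y / (1 - q x).

Lemma remove_vertex_simplex q x : in_simplex q -> q x < 1 ->
  in_simplex (remove_vertex q x).
Proof.
move=> [q0 q1] qx1; have qx0 : 0 < 1 - q x by rewrite subr_gt0.
split=> [y|].
  by rewrite /remove_vertex; case: ifP => // _; exact: divr_ge0 (q0 y) (ltW qx0).
rewrite (bigD1 x) //= /remove_vertex eqxx add0r.
rewrite (eq_bigr (fun y => q y / (1 - q x))) => [|y /negbTE -> //].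
rewrite -mulr_suml.
have -> : \sum_(y | y != x) q y = 1 - q x.
  by move: q1; rewrite (bigD1 x) //= => <-; rewrite addrC addrK.
by rewrite divff // gt_eqF.
Qed.

Lemma remove_vertexE q x : q x != 1 ->
  q = (fun y => q x * vertex x y + (1 - q x) * remove_vertex q x y).
Proof.
move=> qx1; apply: funext => y; rewrite /vertex /remove_vertex.
case: eqP => [-> | _]; first by rewrite mulr1 mulr0 addr0.
by rewrite mulr0 add0r mulrC divfK // subr_eq0 eq_sym.
Qed.

Lemma simplex_eq_vertex q x : in_simplex q -> q x = 1 -> q = vertex x.
Proof.
move=> [q0 q1] qx1; apply: funext => y; rewrite /vertex; case: eqP => [-> // | /eqP yx].
apply: (@psumr_eq0P _ _ (fun z => z != x) q (fun z _ => q0 z)) => //.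
by apply: (addrI (q x)); rewrite addr0 -[LHS](@bigD1 _ _ _ _ x xpredT) //= q1 qx1.
Qed.

Definition convex_on_simplex (f : (X -> R) -> R) : Prop :=
  forall p q (l : R), in_simplex p -> in_simplex q -> 0 <= l <= 1 ->
    f (fun x => l * p x + (1 - l) * q x) <= l * f p + (1 - l) * f q.

Variable f : (X -> R) -> R.
Hypothesis f_convex : convex_on_simplex f.

Lemma convex_simplex_le_vertex (M : R) : (forall x, f (vertex x) <= M) ->
  forall q, in_simplex q -> f q <= M.
Proof.
move=> fM q; move: {2}#|_| (leqnn #|[set x | q x != 0]|) => n.
elim: n q => [|n IH] q supp_q hq; have [x qx0] := simplex_neq0 hq.
  by move: supp_q; rewrite leqn0 => /eqP/cards0_eq/setP/(_ x); rewrite !inE qx0.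
have [qx1 | qxn1] := eqVneq (q x) 1; first by rewrite (simplex_eq_vertex hq qx1).
have qx_lt1 : q x < 1 by rewrite lt_neqAle qxn1 simplex_le1.
have hq' := remove_vertex_simplex hq qx_lt1.
have fq' : f (remove_vertex q x) <= M.
  apply: IH hq'; rewrite -ltnS (leq_trans _ supp_q) //; apply: proper_card.
  apply/properP; split; last by exists x; rewrite !inE /remove_vertex ?eqxx.
  apply/fintype.subsetP => y; rewrite !inE /remove_vertex.
  by case: ifP => _; [rewrite eqxx | rewrite mulf_eq0 negb_or => /andP[]].
rewrite (remove_vertexE qxn1).
apply: (le_trans (f_convex (vertex_simplex x) hq' _)).
  by rewrite (hq.1 x) simplex_le1.
have := fM x; have := hq.1 x; nra.
Qed.

Lemma convex_simplex_bounded_below : exists L, forall p, in_simplex p -> L <= f p.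
Proof.
pose M := \sum_x `|f (vertex x)|.
have fM q : in_simplex q -> f q <= M.
  apply: convex_simplex_le_vertex => x; apply: le_trans (ler_norm _) _.
  by rewrite /M (bigD1 x) //= lerDl sumr_ge0.
pose n : R := #|X|%:R; pose l := (n + 1)^-1.
exists ((f (fun=> n^-1) - (1 - l) * M) / l) => p hp.
have [x0 _] := simplex_neq0 hp.
have n_gt0 : 0 < n by rewrite ltr0n; apply/card_gt0P; exists x0.
have l_gt0 : 0 < l by rewrite invr_gt0; lra.
have l_lt1 : l < 1 by rewrite invf_lt1; lra.
have l_le : l <= n^-1 by rewrite lef_pV2 ?posrE; lra.
pose q x := (n^-1 - l * p x) / (1 - l).
have hq : in_simplex q.
  split=> [x|].
    apply: divr_ge0; last lra.
    have := simplex_le1 x hp; have := hp.1 x; nra.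
  rewrite /q -mulr_suml sumrB -mulr_sumr hp.2 mulr1 sumr_const.
  rewrite -mulr_natr (_ : #|xpredT|%:R = n) // mulVf ?gt_eqF //.
  by rewrite divff // subr_eq0 eq_sym lt_eqF.
have centroidE : (fun=> n^-1) = (fun x => l * p x + (1 - l) * q x).
  apply: funext => x; rewrite /q; field.
  by rewrite -/n !lt0r_neq0 // subr_gt0.
have hl : 0 <= l <= 1 by apply/andP; split; lra.
(* The centroid is [l * p + (1 - l) * q], so convexity bounds [f p] below. *)
have := f_convex hp hq hl; rewrite -centroidE => f_centroid.
have := fM q hq; rewrite ler_pdivrMr //; nra.
Qed.
End Simplex.
Arguments vertex {R X} x.

Section RealExpectation.
Context d (T : measurableType d) (R : realType) (Pr : probability T R).
Local Notation L1 := (Lfun Pr 1).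
Implicit Types X Y : T -> R.

Definition expectR X : R := fine 'E_Pr[X]%E.

Lemma expectRE X : X \in L1 -> 'E_Pr[X]%E = (expectR X)%:E.
Proof. by move=> LX; rewrite fineK // expectation_fin_num. Qed.

Lemma Lfun_sum (I : Type) (r : seq I) (X : I -> T -> R) :
  (forall i, X i \in L1) -> (fun w => \sum_(i <- r) X i w) \in L1.
Proof. by move=> LX; rewrite -fct_sumE rpred_sum. Qed.

Lemma Lfun_scale_l (a : R) X : X \in L1 -> (fun w => a * X w) \in L1.
Proof. exact: rpredZ. Qed.

Lemma expectR_le X Y : X \in L1 -> Y \in L1 -> (forall w, X w <= Y w) ->
  expectR X <= expectR Y.
Proof.
move=> LX LY XY; rewrite -lee_fin -!expectRE // unlock.
by apply: le_integral => [|||w _]; rewrite ?lee_fin //; exact/Lfun1_integrable.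
Qed.

Lemma expectRD X Y : X \in L1 -> Y \in L1 ->
  expectR (X \+ Y) = expectR X + expectR Y.
Proof.
by move=> LX LY; apply/EFin_inj; rewrite EFinD -!expectRE ?expectationD ?rpredD.
Qed.

Lemma expectRZ (a : R) X : X \in L1 -> expectR (fun w => a * X w) = a * expectR X.
Proof.
move=> LX; apply/EFin_inj; rewrite EFinM -!expectRE ?Lfun_scale_l // -expectationZl //.
by congr ('E_Pr[_])%E; apply: funext => w; rewrite mulrC.
Qed.

Lemma expectR_sum (I : Type) (r : seq I) (X : I -> T -> R) :
  (forall i, X i \in L1) ->
  expectR (fun w => \sum_(i <- r) X i w) = \sum_(i <- r) expectR (X i).
Proof.
move=> LX; elim: r => [|i r IH].
  by under eq_fun do rewrite big_nil; rewrite /expectR expectation_cst big_nil.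
by under eq_fun do rewrite big_cons; rewrite expectRD ?Lfun_sum // big_cons IH.
Qed.

Lemma expectR_subsolution (S : finType) (M : S -> S -> R) (gamma : R)
    (U G : S -> T -> R) :
  (forall s, U s \in L1) -> (forall s, G s \in L1) ->
  (forall s w, U s w <= G s w + gamma * \sum_s' M s s' * U s' w) ->
  forall s,
  expectR (U s) <= expectR (G s) + gamma * \sum_s' M s s' * expectR (U s').
Proof.
move=> LU LG sub s.
have LMU : (fun w => \sum_s' M s s' * U s' w) \in L1.
  by apply: Lfun_sum => s'; exact: Lfun_scale_l.
rewrite (eq_bigr (fun s' => expectR (fun w => M s s' * U s' w))); last first.
  by move=> s' _; rewrite expectRZ.
rewrite -(expectR_sum _ (fun s' => Lfun_scale_l _ (LU s'))) -expectRZ //.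
rewrite -expectRD ?Lfun_scale_l //.
by apply: expectR_le => //; rewrite rpredD ?Lfun_scale_l.
Qed.

End RealExpectation.

Lemma subsolution_le_max (R : realType) (S : finType) (M : S -> S -> R)
    (u g : S -> R) (gamma : R) :
  0 <= gamma < 1 -> (forall s s', 0 <= M s s') -> (forall s, \sum_s' M s s' = 1) ->
  (forall s, u s <= g s + gamma * \sum_s' M s s' * u s') ->
  forall s, exists s0, u s <= (1 - gamma)^-1 * g s0.
Proof.
move=> /andP[g0 g1] M0 M1 sub s.
have [s0 _ u_max] := @arg_maxP _ R S s xpredT u isT.
have u_le s' : u s' <= u s0 := u_max s' isT.
have Mu : \sum_s' M s0 s' * u s' <= u s0.
  rewrite -[leRHS]mul1r -(M1 s0) mulr_suml; apply: ler_sum => s' _.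
  exact: ler_wpM2l.
exists s0; rewrite mulrC ler_pdivlMr ?subr_gt0 //.
have := sub s0; have := u_le s; nra.
Qed.

Section MDP.
Import numFieldNormedType.Exports.
Local Open Scope classical_set_scope.
Variables (R : realType) (S A : finType).
Variables (P : S -> A -> S -> R) (c : S -> A -> R) (h : S -> (A -> R) -> R).
Variable gamma : R.
Hypothesis P_trans : is_transition P.
Hypothesis norm_gamma_lt1 : `|gamma| < 1.

Local Notation V pi := (Vf P c h gamma pi).

Definition policy_trans (pi : S -> A -> R) (s s' : S) : R := \sum_a pi s a * P s a s'.

Definition disc_term (pi : S -> A -> R) (mu : S -> R) (t : nat) : R :=
  gamma ^+ t * \sum_s' state_dist P pi mu t s' * stage_cost c h pi s'.

Implicit Types (pi : S -> A -> R) (mu : S -> R) (s : S).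

Lemma policy_trans_ge0 pi s s' : is_policy pi -> 0 <= policy_trans pi s s'.
Proof.
move=> hpi; apply: sumr_ge0 => a _.
by apply: mulr_ge0; [exact: (hpi s).1 | exact: (P_trans s a).1].
Qed.

Lemma policy_trans_sum1 pi s : is_policy pi -> \sum_s' policy_trans pi s s' = 1.
Proof.
move=> hpi; rewrite exchange_big -(hpi s).2; apply: eq_bigr => a _.
by rewrite -mulr_sumr (P_trans s a).2 mulr1.
Qed.

Lemma state_dist_simplex pi mu t : is_policy pi -> in_simplex mu ->
  in_simplex (state_dist P pi mu t).
Proof.
move=> hpi hmu; elim: t => [//|t [d0 d1]]; split=> [s''|] /=.
  by apply: sumr_ge0 => s' _; rewrite mulr_ge0 ?policy_trans_ge0.
rewrite exchange_big -d1; apply: eq_bigr => s' _.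
by rewrite -mulr_sumr (policy_trans_sum1 _ hpi) mulr1.
Qed.

Lemma state_dist_lin pi mu t s'' :
  state_dist P pi mu t s'' = \sum_s mu s * state_dist P pi (vertex s) t s''.
Proof.
elim: t s'' => [|t IH] s'' /=; first by rewrite sum_Mvertex.
under eq_bigr do rewrite IH mulr_suml.
rewrite exchange_big; apply: eq_bigr => s _.
by rewrite mulr_sumr; apply: eq_bigr => s' _; rewrite mulrA.
Qed.

Lemma state_distS pi mu t :
  state_dist P pi mu t.+1 =
  state_dist P pi (fun s'' => \sum_s' mu s' * policy_trans pi s' s'') t.
Proof. by elim: t => [//|t IH] /=; rewrite -IH. Qed.

Lemma disc_term_lin pi mu t :
  disc_term pi mu t = \sum_s mu s * disc_term pi (vertex s) t.
Proof.
rewrite /disc_term; under eq_bigr do rewrite state_dist_lin mulr_suml.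
rewrite exchange_big mulr_sumr; apply: eq_bigr => s _.
rewrite [RHS]mulrCA [in RHS]mulr_sumr; congr (_ * _).
by apply: eq_bigr => s' _; rewrite mulrA.
Qed.

Lemma disc_series_cvg pi mu : is_policy pi -> in_simplex mu ->
  cvgn (series (disc_term pi mu)).
Proof.
move=> hpi hmu; apply: normed_cvg.
pose C := \sum_s `|stage_cost c h pi s|.
apply: (@series_le_cvg _ _ (geometric C `|gamma|)) => [n|n|n|] /=.
- exact: normr_ge0.
- by rewrite /geometric mulr_ge0 ?exprn_ge0 ?sumr_ge0.
- rewrite /geometric /disc_term /= normrM normrX mulrC ler_wpM2r ?exprn_ge0 //.
  exact/norm_simplex_comb_le/state_dist_simplex.
- by apply: is_cvg_geometric_series; rewrite normr_id.
Qed.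

Lemma disc_series_cvg_to pi mu : is_policy pi ->
  series (disc_term pi mu) @ \oo --> \sum_s mu s * V pi s.
Proof.
move=> hpi; have -> : series (disc_term pi mu) =
    (fun n => \sum_s mu s * series (disc_term pi (vertex s)) n).
  apply: funext => n; rewrite seriesEord /=.
  under eq_bigr do rewrite disc_term_lin.
  by rewrite exchange_big; apply: eq_bigr => s _; rewrite seriesEord mulr_sumr.
apply: cvg_big => [|s _]; first exact: add_continuous.
by apply: cvgMr; exact/disc_series_cvg/vertex_simplex.
Qed.

Lemma disc_valueE pi mu : is_policy pi ->
  disc_value P c h gamma pi mu = \sum_s mu s * V pi s.
Proof. by move=> hpi; apply: cvg_lim => //; exact: disc_series_cvg_to. Qed.

Lemma Vf_bellman pi s : is_policy pi ->
  V pi s = stage_cost c h pi s + gamma * \sum_s' policy_trans pi s s' * V pi s'.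
Proof.
move=> hpi.
have vertex_trans :
    (fun s'' => \sum_s' vertex s s' * policy_trans pi s' s'') = policy_trans pi s.
  by apply: funext => s''; rewrite sum_vertexM.
have seriesS n : series (disc_term pi (vertex s)) n.+1 =
    stage_cost c h pi s + gamma * series (disc_term pi (policy_trans pi s)) n.
  rewrite !seriesEord /= big_ord_recl /disc_term expr0 mul1r sum_vertexM mulr_sumr.
  congr (_ + _); apply: eq_bigr => t _.
  by rewrite state_distS vertex_trans exprS -mulrA.
apply: cvg_lim => //; rewrite -cvg_shiftS /=; under eq_fun do rewrite seriesS.
by apply: cvgD; [exact: cvg_cst | apply: cvgMr; exact: disc_series_cvg_to].
Qed.

Lemma QfE pi s a : is_policy pi ->
  Qf P c h gamma pi s a = c s a + h s (pi s) + gamma * \sum_s' P s a s' * V pi s'.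
Proof. by move=> hpi; rewrite /Qf disc_valueE. Qed.

Lemma psiE pi s p : is_policy pi -> in_simplex p ->
  psi P c h gamma pi s p = \sum_a p a * c s a + h s p +
    gamma * \sum_s' (\sum_a p a * P s a s') * V pi s' - V pi s.
Proof.
move=> hpi [_ p1]; rewrite /psi; under eq_bigr do rewrite QfE //.
have -> : \sum_s' (\sum_a p a * P s a s') * V pi s' =
    \sum_a p a * \sum_s' P s a s' * V pi s'.
  under eq_bigr do rewrite mulr_suml; rewrite exchange_big; apply: eq_bigr => a _.
  by rewrite mulr_sumr; apply: eq_bigr => s' _; rewrite mulrA.
rewrite (eq_bigr (fun a => p a * c s a + h s (pi s) * p a +
    gamma * (p a * \sum_s' P s a s' * V pi s'))) => [|a _]; last by ring.
by rewrite !big_split /= -!mulr_sumr p1; ring.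
Qed.

Lemma performance_difference pi pi' s : is_policy pi -> is_policy pi' ->
  V pi s - V pi' s = - psi P c h gamma pi s (pi' s) +
    gamma * \sum_s' policy_trans pi' s s' * (V pi s' - V pi' s').
Proof.
move=> hpi hpi'; rewrite psiE // (Vf_bellman s hpi').
have -> : \sum_s' policy_trans pi' s s' * (V pi s' - V pi' s') =
    \sum_s' policy_trans pi' s s' * V pi s' -
    \sum_s' policy_trans pi' s s' * V pi' s'.
  by rewrite -sumrB; apply: eq_bigr => s' _; rewrite mulrBr.
by rewrite /stage_cost /policy_trans; ring.
Qed.

Lemma advantage_le_gap k (pis : 'I_k -> S -> A -> R) s p :
  convex_on_simplex (h s) -> in_simplex p ->
  - \sum_t psi P c h gamma (pis t) s p <= gap P c h gamma pis s.
Proof.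
move=> h_convex hp; have [L hL] := convex_simplex_bounded_below h_convex.
apply: sup_upper_bound; last by exists p.
split; first by exists (- \sum_t psi P c h gamma (pis t) s p), p.
exists (\sum_t (\sum_a `|Qf P c h gamma (pis t) s a| + V (pis t) s - L +
                h s (pis t s))).
move=> _ [q hq <-]; rewrite -sumrN; apply: ler_sum => t _.
have hQ : - \sum_a Qf P c h gamma (pis t) s a * q a <=
          \sum_a `|Qf P c h gamma (pis t) s a|.
  under eq_bigr do rewrite mulrC.
  by apply: le_trans (norm_simplex_comb_le _ hq); rewrite -normrN ler_norm.
by have := hL q hq; rewrite /psi; lra.
Qed.

Lemma regret_subsolution k (pis : 'I_k -> S -> A -> R) pistar s :
  (forall t, is_policy (pis t)) -> is_policy pistar ->
  (forall s, convex_on_simplex (h s)) ->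
  \sum_t (V (pis t) s - V pistar s) <= gap P c h gamma pis s +
    gamma * \sum_s' policy_trans pistar s s' * \sum_t (V (pis t) s' - V pistar s').
Proof.
move=> hpis hstar h_convex.
under eq_bigr do rewrite (performance_difference s (hpis _) hstar).
rewrite big_split /= -mulr_sumr sumrN exchange_big /=.
under [X in _ * X]eq_bigr do rewrite -mulr_sumr.
by rewrite lerD2r advantage_le_gap.
Qed.

End MDP.

Theorem proposition2p3 (R : realType) (S A : finType)
  (P : S -> A -> S -> R) (c : S -> A -> R) (h : S -> (A -> R) -> R) (gamma : R)
  (pistar : S -> A -> R)
  (d : measure_display) (T : measurableType d) (Pr : probability T R)
  (k : nat) (pis : T -> 'I_k -> S -> A -> R) :
  0 <= gamma < 1 ->
  is_transition P ->
  (forall s, closed_convex_on_simplex (h s)) ->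
  is_policy pistar ->
  (forall pi, is_policy pi -> forall s,
     Vf P c h gamma pistar s <= Vf P c h gamma pi s) ->
  (0 < k)%N ->
  (forall w t, is_policy (pis w t)) ->
  (forall (t : 'I_k) s,
     Pr.-integrable setT (fun w => (Vf P c h gamma (pis w t) s)%:E)) ->
  (forall s, Pr.-integrable setT (fun w => (gap P c h gamma (pis w) s)%:E)) ->
  forall s : S,
    (\sum_(t < k) 'E_Pr[fun w => (Vf P c h gamma (pis w t) s
                                  - Vf P c h gamma pistar s)%R]
     <= ((1 - gamma)^-1)%:E *
        \big[Order.max/-oo]_(s' : S) 'E_Pr[fun w => gap P c h gamma (pis w) s' : R])%E.
Proof.
move=> gamma01 hP hh hstar _ _ hpis hV hG s.
have /andP[gamma_ge0 gamma_lt1] := gamma01.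
have norm_gamma_lt1 : `|gamma| < 1 by rewrite ger0_norm.
pose U s' w := \sum_t (Vf P c h gamma (pis w t) s' - Vf P c h gamma pistar s').
pose G s' w := gap P c h gamma (pis w) s'.
have LV t s' :
    (fun w => Vf P c h gamma (pis w t) s' - Vf P c h gamma pistar s') \in Lfun Pr 1.
  by apply: rpredB; [apply/(Lfun1_integrable Pr _).2; exact: hV | exact: Lfun_cst].
have LU s' : U s' \in Lfun Pr 1 := Lfun_sum _ (LV ^~ s').
have LG s' : G s' \in Lfun Pr 1 by apply/(Lfun1_integrable Pr _).2; exact: hG.
have regret s' w :
    U s' w <= G s' w + gamma * \sum_s'' policy_trans P pistar s' s'' * U s'' w.
  exact: regret_subsolution (hpis w) hstar (fun s'' => (hh s'').1).
have [s0 Us] := subsolution_le_max gamma01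
  (fun s1 s2 => policy_trans_ge0 hP s1 s2 hstar) (fun s1 => policy_trans_sum1 hP s1 hstar)
  (expectR_subsolution LU LG regret) s.
under eq_bigr do rewrite expectRE ?LV //.
rewrite sumEFin -expectR_sum //.
apply: (@le_trans _ _ ((1 - gamma)^-1 * expectR Pr (G s0))%:E); first by rewrite lee_fin.
rewrite EFinM -expectRE //; apply: lee_wpmul2l; last exact: le_bigmax.
by rewrite lee_fin invr_ge0 subr_ge0 ltW.
Qed.
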